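(* Let $T$ be a rank-$r$ tensor and $t$ a rank-$s$ tensor, and let $1\le i\le r$, $1\le j\le s$. If $T,t\in\mathcal{DP}$, or if $T,t\in-\mathcal{DP}$, then $(T\,{}_i\!\times_j t)\in\mathcal{DP}$. If $T\in\mathcal{DP}$ and $t\in-\mathcal{DP}$, then $(T\,{}_i\!\times_j t)\in-\mathcal{DP}$ and $(t\,{}_j\!\times_i T)\in-\mathcal{DP}$.
   Context: Lorentzian metric of signature $(+,-,\dots,-)$ with time orientation; causal: $v\ne0$, $v\cdot v\ge0$. $\mathcal{DP}$: tensors $X_{a_1\dots a_m}$ with $X_{a_1\dots a_m}u_1^{a_1}\cdots u_m^{a_m}\ge0$ for all causal future-pointing $u_k$ (rank 0: non-negative reals); $-\mathcal{DP}=\{X:-X\in\mathcal{DP}\}$. The product $(T\,{}_i\!\times_j t)_{a_1\dots a_{r+s-2}}=T_{a_1\dots a_{i-1}ba_i\dots a_{r-1}}\,t_{a_r\dots a_{r+j-2}}{}^{b}{}_{a_{r+j-1}\dots a_{r+s-2}}$ contracts the $i$-th index of $T$ with the $j$-th index of $t$. *)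

From HB Require Import structures.
From mathcomp Require Import all_boot all_order all_algebra.
Set Implicit Arguments. Unset Strict Implicit. Unset Printing Implicit Defensive.
Import Order.TTheory GRing.Theory Num.Theory.
Local Open Scope ring_scope.

(* Minkowski space of dimension d = n.+1 with orthonormal basis e_0,...,e_n,
   metric eta = diag(+1,-1,...,-1); index 0 is the time direction. *)

Section Lorentz.
Variable R : realFieldType.
Variable n : nat.
Notation d := n.+1.

Definition eta (k : 'I_d) : R := if k == ord0 then 1 else -1.

(* a vector (contravariant components u^a) *)
Definition vec := 'I_d -> R.

Definition mdot (u v : vec) : R := \sum_(k < d) eta k * u k * v k.

Definition causal (u : vec) : Prop := (exists k, u k != 0) /\ 0 <= mdot u u.

Definition future_causal (u : vec) : Prop := causal u /\ 0 < u ord0.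

(* covariant tensor of rank m: components X_{a_1 ... a_m} indexed by
   an assignment of basis indices to the m slots *)
Definition tensor (m : nat) := {ffun 'I_m -> 'I_d} -> R.

Definition teval (m : nat) (X : tensor m) (u : 'I_m -> vec) : R :=
  \sum_(f : {ffun 'I_m -> 'I_d}) X f * \prod_(k < m) u k (f k).

Definition DP (m : nat) (X : tensor m) : Prop :=
  forall u : 'I_m -> vec, (forall k, future_causal (u k)) -> 0 <= teval X u.

Definition negDP (m : nat) (X : tensor m) : Prop := DP (fun f => - X f).

Definition ins (m : nat) (i : 'I_m.+1) (b : 'I_d) (g : 'I_m -> 'I_d) :
  {ffun 'I_m.+1 -> 'I_d} :=
  [ffun k => match unlift i k with None => b | Some k' => g k' end].

(* (T _i x_j t): contract slot i of T (rank r.+1) with slot j of t (rank s.+1);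
   the free indices of T come first, then those of t; the contracted index is
   raised with the inverse metric eta^{bb} = eta_{bb}. Slots are 0-based. *)
Definition tprod (r s : nat) (T : tensor r.+1) (t : tensor s.+1)
    (i : 'I_r.+1) (j : 'I_s.+1) : tensor (r + s) :=
  fun f => \sum_(b < d)
    eta b * T (ins i b (fun k => f (lshift s k)))
          * t (ins j b (fun k => f (rshift r k))).

End Lorentz.

(* A covector A is dominant when A(v) >= 0 for every future-directed causal v.
   Testing A against v = (Q + x^2, -2x A_1, ..., -2x A_n), with Q the spatial
   norm |A_s|^2 and x > 0, which is causal because (Q + x^2)^2 - 4 x^2 Q is a
   square, gives |A_s|^2 <= A_0^2: the index-raised A is zero or future causal.
   Hence two dominant covectors have nonnegative Minkowski product.  Fixing all
   vectors except on the contracted slots turns T and t into dominant covectors,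
   and T _i x_j t evaluated on those vectors is exactly their Minkowski product.
   The sign cases follow by bilinearity of the contraction. *)

From mathcomp Require Import all_boot all_order all_algebra.
From mathcomp Require Import ring lra.
Set Implicit Arguments. Unset Strict Implicit. Unset Printing Implicit Defensive.
Import Order.TTheory GRing.Theory Num.Theory.
Local Open Scope ring_scope.

Section DominantCovectors.
Variables (R : realFieldType) (n : nat).
Implicit Types (u v : vec R n) (A B : 'I_n.+1 -> R).

Lemma eta0 : eta R (@ord0 n) = 1.
Proof. by rewrite /eta eqxx. Qed.

Lemma eta_lift (k : 'I_n) : eta R (lift ord0 k) = -1.
Proof. by rewrite /eta eq_sym (negbTE (neq_lift _ _)). Qed.

Lemma big_time_space (F : 'I_n.+1 -> R) :
  \sum_b F b = F ord0 + \sum_(k < n) F (lift ord0 k).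
Proof. exact: big_ord_recl. Qed.

Definition spatial_norm2 A : R := \sum_(k < n) A (lift ord0 k) ^+ 2.

Lemma spatial_norm2_ge0 A : 0 <= spatial_norm2 A.
Proof. by apply: sumr_ge0 => k _; exact: sqr_ge0. Qed.

Lemma mdot_self u : mdot u u = u ord0 ^+ 2 - spatial_norm2 u.
Proof.
rewrite /mdot big_time_space eta0 mul1r -expr2 -sumrN; congr (_ + _).
by apply: eq_bigr => k _; rewrite eta_lift mulN1r mulNr expr2.
Qed.

Lemma future_causal_intro u :
  0 < u ord0 -> spatial_norm2 u <= u ord0 ^+ 2 -> future_causal u.
Proof.
move=> u0 hu; split=> //; split; first by exists ord0; rewrite gt_eqF.
by rewrite mdot_self subr_ge0.
Qed.

Definition dominant A : Prop :=
  forall v, future_causal v -> 0 <= \sum_b v b * A b.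

Lemma dominant_time_ge0 A : dominant A -> 0 <= A ord0.
Proof.
pose e0 (k : 'I_n.+1) : R := (k == ord0)%:R.
have e0_lift (k : 'I_n) : (lift ord0 k == ord0) = false.
  by rewrite eq_sym (negbTE (neq_lift _ _)).
move=> /(_ e0); rewrite big_time_space big1 => [|k _]; last first.
  by rewrite /e0 e0_lift mul0r.
rewrite /e0 eqxx mul1r addr0; apply; apply: future_causal_intro; first exact: ltr01.
by rewrite /spatial_norm2 big1 ?expr1n ?ler01 // => k _; rewrite e0_lift expr0n.
Qed.

Lemma dominant_test A x : dominant A -> 0 < x ->
  2 * x * spatial_norm2 A <= (spatial_norm2 A + x ^+ 2) * A ord0.
Proof.
move=> hA x0; set Q := spatial_norm2 A.
have Q0 : 0 <= Q := spatial_norm2_ge0 A.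
pose v (k : 'I_n.+1) := if k == ord0 then Q + x ^+ 2 else - (2 * x * A k).
have v0 : v ord0 = Q + x ^+ 2 by rewrite /v eqxx.
have v_lift (k : 'I_n) : v (lift ord0 k) = - (2 * x * A (lift ord0 k)).
  by rewrite /v eq_sym (negbTE (neq_lift _ _)).
have v_causal : future_causal v.
  apply: future_causal_intro; first by rewrite v0; nra.
  rewrite v0 /spatial_norm2 (eq_bigr (fun k : 'I_n => 4 * x ^+ 2 * A (lift ord0 k) ^+ 2));
    last by move=> k _; rewrite v_lift; ring.
  rewrite -mulr_sumr -/Q -subr_ge0.
  have -> : (Q + x ^+ 2) ^+ 2 - 4 * x ^+ 2 * Q = (Q - x ^+ 2) ^+ 2 by ring.
  exact: sqr_ge0.
have := hA v v_causal; rewrite big_time_space v0.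
rewrite (eq_bigr (fun k : 'I_n => - (2 * x) * A (lift ord0 k) ^+ 2)); last first.
  by move=> k _; rewrite v_lift; ring.
by rewrite -mulr_sumr; change (\sum_(k < n) _) with Q; lra.
Qed.

Lemma dominant_spatial_le A : dominant A -> spatial_norm2 A <= A ord0 ^+ 2.
Proof.
move=> hA; have a0 := dominant_time_ge0 hA.
have Q0 := spatial_norm2_ge0 A.
have [a_eq0|a_neq0] := eqVneq (A ord0) 0.
  by have := dominant_test hA ltr01; rewrite a_eq0; nra.
have a_gt0 : 0 < A ord0 by rewrite lt_def a_neq0.
by have := dominant_test hA a_gt0; nra.
Qed.

Lemma dominant_time_eq0 A : dominant A -> A ord0 = 0 -> forall b, A b = 0.
Proof.
move=> hA a0 b; have := dominant_spatial_le hA; rewrite a0 expr0n /= => hQ.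
have Q0 : spatial_norm2 A = 0 by apply/eqP; rewrite eq_le hQ spatial_norm2_ge0.
case: (unliftP ord0 b) => [k ->|->] //.
have /eqP := @psumr_eq0P _ _ _ (fun k : 'I_n => A (lift ord0 k) ^+ 2)
  (fun k _ => sqr_ge0 _) Q0 k isT.
by rewrite sqrf_eq0 => /eqP.
Qed.

Lemma mcodot_dominant_ge0 A B :
  dominant A -> dominant B -> 0 <= \sum_b eta R b * A b * B b.
Proof.
move=> hA hB; have [a0|a_neq0] := eqVneq (A ord0) 0.
  by rewrite big1 // => b _; rewrite (dominant_time_eq0 hA a0) mulr0 mul0r.
pose a b := eta R b * A b.
have a_causal : future_causal a.
  apply: future_causal_intro; rewrite /a eta0 mul1r.
    by rewrite lt_def a_neq0 dominant_time_ge0.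
  rewrite /spatial_norm2 (eq_bigr (fun k : 'I_n => A (lift ord0 k) ^+ 2)).
    exact: dominant_spatial_le.
  by move=> k _; rewrite eta_lift mulN1r sqrrN.
by have := hB a a_causal; under eq_bigr do rewrite /a mulrC mulrA.
Qed.

End DominantCovectors.

Section Reindexing.
Variable D : finType.

Definition ffun_cat (r s : nat) (gL : {ffun 'I_r -> D}) (gR : {ffun 'I_s -> D}) :
  {ffun 'I_(r + s) -> D} :=
  [ffun k => match split k with inl a => gL a | inr c => gR c end].

Lemma ffun_cat_lshift r s gL gR (a : 'I_r) : @ffun_cat r s gL gR (lshift s a) = gL a.
Proof. by rewrite ffunE (unsplitK (inl _ a)). Qed.

Lemma ffun_cat_rshift r s gL gR (c : 'I_s) : @ffun_cat r s gL gR (rshift r c) = gR c.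
Proof. by rewrite ffunE (unsplitK (inr _ c)). Qed.

Lemma big_ffun_cat (V : nmodType) r s (F : {ffun 'I_(r + s) -> D} -> V) :
  \sum_f F f = \sum_(gL : {ffun 'I_r -> D}) \sum_(gR : {ffun 'I_s -> D})
                 F (ffun_cat gL gR).
Proof.
rewrite pair_big /= (reindex (fun p => ffun_cat p.1 p.2)) //.
exists (fun f : {ffun 'I_(r + s) -> D} =>
  ([ffun a => f (lshift s a)], [ffun c => f (rshift r c)])).
  move=> [gL gR] _; congr pair; apply/ffunP => k;
  by rewrite ffunE ?ffun_cat_lshift ?ffun_cat_rshift.
move=> f _; apply/ffunP => k; rewrite -[k]splitK.
by case: (split k) => a; rewrite ?ffun_cat_lshift ?ffun_cat_rshift ffunE.
Qed.

End Reindexing.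

Lemma eq_ins (n m : nat) (i : 'I_m.+1) (b : 'I_n.+1) (g1 g2 : 'I_m -> 'I_n.+1) :
  g1 =1 g2 -> ins i b g1 = ins i b g2.
Proof. by move=> e; apply/ffunP => k; rewrite !ffunE; case: unlift => // k'; rewrite e. Qed.

Lemma big_ffun_ins (V : nmodType) (n m : nat) (i : 'I_m.+1)
    (F : {ffun 'I_m.+1 -> 'I_n.+1} -> V) :
  \sum_f F f = \sum_(b < n.+1) \sum_(g : {ffun 'I_m -> 'I_n.+1}) F (ins i b g).
Proof.
rewrite pair_big /=.
rewrite (reindex (fun p : 'I_n.+1 * {ffun 'I_m -> 'I_n.+1} => ins i p.1 p.2)) //.
exists (fun f : {ffun 'I_m.+1 -> 'I_n.+1} => (f i, [ffun k => f (lift i k)])).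
  move=> [b g] _; rewrite /= !ffunE unlift_none; congr pair.
  by apply/ffunP => k; rewrite !ffunE liftK.
by move=> f _; apply/ffunP => k; rewrite /= !ffunE; case: unliftP => [k'|] ->; rewrite ?ffunE.
Qed.

Section TensorContraction.
Variables (R : realFieldType) (n : nat).

Definition teval_free (m : nat) (X : tensor R n m.+1) (i : 'I_m.+1)
    (u : 'I_m -> vec R n) (b : 'I_n.+1) : R :=
  \sum_(g : {ffun 'I_m -> 'I_n.+1}) X (ins i b g) * \prod_(k < m) u k (g k).

Lemma teval_insert m (X : tensor R n m.+1) (i : 'I_m.+1) u v :
  teval X (fun k => if unlift i k is Some k' then u k' else v)
  = \sum_b v b * teval_free X i u b.
Proof.
rewrite /teval (big_ffun_ins i); apply: eq_bigr => b _; rewrite mulr_sumr.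
apply: eq_bigr => g _; rewrite (bigD1_ord i) //= ffunE unlift_none.
by under eq_bigr do rewrite ffunE liftK; rewrite mulrCA.
Qed.

Lemma dominant_teval_free m (X : tensor R n m.+1) (i : 'I_m.+1) u :
  DP X -> (forall k, future_causal (u k)) -> dominant (teval_free X i u).
Proof. by move=> hX hu v hv; rewrite -teval_insert; apply: hX => k; case: unlift. Qed.

Lemma teval_tprod (r s : nat) (T : tensor R n r.+1) (t : tensor R n s.+1)
    (i : 'I_r.+1) (j : 'I_s.+1) (u : 'I_(r + s) -> vec R n) :
  teval (tprod T t i j) u =
  \sum_b eta R b * teval_free T i (fun k => u (lshift s k)) b
                 * teval_free t j (fun k => u (rshift r k)) b.
Proof.
rewrite /teval big_ffun_cat /teval_free.
under [RHS]eq_bigr => b _.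
  rewrite -mulrA big_distrl mulr_sumr /=.
  under eq_bigr do rewrite big_distrr mulr_sumr /=.
  over.
rewrite [RHS]exchange_big /=; apply: eq_bigr => gL _.
rewrite [RHS]exchange_big /=; apply: eq_bigr => gR _.
rewrite /tprod big_distrl /=; apply: eq_bigr => b _.
rewrite (eq_ins _ _ (ffun_cat_lshift gL gR)) (eq_ins _ _ (ffun_cat_rshift gL gR)).
rewrite big_split_ord /=.
under eq_bigr do rewrite ffun_cat_lshift.
under [X in _ * (_ * X)]eq_bigr do rewrite ffun_cat_rshift.
ring.
Qed.

Lemma DP_ext m (X Y : tensor R n m) : X =1 Y -> DP X -> DP Y.
Proof.
move=> eXY hX u hu; rewrite /teval.
by under eq_bigr do rewrite -eXY; exact: hX.
Qed.

Lemma DP_tprod (r s : nat) (T : tensor R n r.+1) (t : tensor R n s.+1)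
    (i : 'I_r.+1) (j : 'I_s.+1) :
  DP T -> DP t -> DP (tprod T t i j).
Proof.
move=> hT ht u hu; rewrite teval_tprod.
by apply: mcodot_dominant_ge0; apply: dominant_teval_free.
Qed.

Section Sign.
Variables (r s : nat) (T : tensor R n r.+1) (t : tensor R n s.+1).
Variables (i : 'I_r.+1) (j : 'I_s.+1).

Lemma tprodNl : tprod (fun f => - T f) t i j =1 (fun f => - tprod T t i j f).
Proof. by move=> f; rewrite /tprod -sumrN; apply: eq_bigr => b _; rewrite mulrN mulNr. Qed.

Lemma tprodNr : tprod T (fun f => - t f) i j =1 (fun f => - tprod T t i j f).
Proof. by move=> f; rewrite /tprod -sumrN; apply: eq_bigr => b _; rewrite mulrN. Qed.

Lemma tprodNN : tprod (fun f => - T f) (fun f => - t f) i j =1 tprod T t i j.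
Proof.
by move=> f; rewrite /tprod; apply: eq_bigr => b _; rewrite !mulrN !mulNr opprK.
Qed.

End Sign.

End TensorContraction.

Theorem mainTheorem18 (R : realFieldType) (n r s : nat)
    (T : tensor R n r.+1) (t : tensor R n s.+1)
    (i : 'I_r.+1) (j : 'I_s.+1) :
  ((DP T /\ DP t) \/ (negDP T /\ negDP t) -> DP (tprod T t i j)) /\
  (DP T -> negDP t -> negDP (tprod T t i j) /\ negDP (tprod t T j i)).
Proof.
split.
  case=> [[hT ht]|[hT ht]]; first exact: DP_tprod.
  exact: DP_ext (tprodNN T t i j) (DP_tprod i j hT ht).
move=> hT ht; split.
  exact: DP_ext (tprodNr T t i j) (DP_tprod i j hT ht).
exact: DP_ext (tprodNl t T j i) (DP_tprod j i ht hT).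
Qed.
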